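(* Let $U$ be a finite nonempty set, $R$ an equivalence relation on $U$, and $M(R)$ the support matroid induced by $R$, with rank function $r_{(R)}$. Then for every $X\subseteq U$, $$r_{(R)}(X)=|\{RN(x)\mid x\in U,\ RN(x)\cap X\neq\emptyset\}|,$$ i.e. the number of equivalence classes of $R$ meeting $X$.
   Context: For $x\in U$, $RN(x)=\{y\in U\mid xRy\}$; $R^{*}(X)=\{x\in U\mid RN(x)\cap X\neq\emptyset\}$. Let $\mathbf{S}(R)=\{X\subseteq U\mid R^{*}(X)=U\}$. The support matroid $M(R)=(U,\mathbf{I}(R))$ is the matroid on $U$ whose independent sets $\mathbf{I}(R)$ are the subsets of inclusion-minimal members of $\mathbf{S}(R)$. The rank function of a matroid $(U,\mathbf{I})$ is $r(X)=\max\{|I|\mid I\subseteq X,\ I\in\mathbf{I}\}$. *)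

From mathcomp Require Import all_boot.
Set Implicit Arguments. Unset Strict Implicit. Unset Printing Implicit Defensive.

Section Support.
Variable T : finType.
Variable R : rel T.

Definition RN (x : T) : {set T} := [set y | R x y].

Definition Rstar (X : {set T}) : {set T} := [set x | RN x :&: X != set0].

Definition supp (X : {set T}) : bool := Rstar X == [set: T].

Definition supp_indep (I : {set T}) : bool :=
  [exists B : {set T}, minset supp B && (I \subset B)].

Definition supp_rank (X : {set T}) : nat :=
  \max_(I : {set T} | supp_indep I && (I \subset X)) #|I|.

End Support.

From mathcomp Require Import all_boot.
Set Implicit Arguments. Unset Strict Implicit. Unset Printing Implicit Defensive.

(* A minimal support set meets every equivalence class exactly once: it meets
   each class by the support property, and of two of its points in one class
   either is redundant.  Hence RN maps an independent subset of X injectively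
   into the classes meeting X.  Conversely, a minimal support set contained in
   X together with all classes missing X meets every class that meets X inside
   X, so its trace on X is an independent set of the required size. *)

Lemma suppP (T : finType) (R : rel T) (B : {set T}) :
  reflect (forall x, RN R x :&: B != set0) (supp R B).
Proof.
apply: (iffP eqP) => [suppB x | meetB].
  by have := in_setT x; rewrite -suppB inE.
by apply/setP => x; rewrite !inE meetB.
Qed.

Section SupportMatroidOfEquivalence.
Variables (T : finType) (R : rel T).
Hypothesis eqR : equivalence_rel R.

Let reflR : reflexive R. Proof. by case/equivalence_relP: eqR. Qed.
Let ltransR : left_transitive R. Proof. by case/equivalence_relP: eqR. Qed.

Lemma RN_refl x : x \in RN R x.
Proof. by rewrite inE reflR. Qed.

Lemma eq_RN x y : y \in RN R x -> RN R x = RN R y.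
Proof. by rewrite inE => /ltransR Rxy; apply/setP => z; rewrite !inE Rxy. Qed.

Lemma minset_supp_inj B : minset (supp R) B -> {in B &, injective (RN R)}.
Proof.
case/minsetP=> /suppP suppB minB y z yB zB RNyz.
apply/eqP/negPn/negP => neq_yz.
have suppBz : supp R (B :\ z).
  apply/suppP => x; have /set0Pn[w /setIP[wRNx wB]] := suppB x.
  apply/set0Pn; have [eq_wz | neq_wz] := eqVneq w z; last first.
    by exists w; rewrite in_setI in_setD1 neq_wz wRNx wB.
  move: wRNx; rewrite eq_wz => zRNx.
  by exists y; rewrite in_setI in_setD1 neq_yz yB (eq_RN zRNx) -RNyz RN_refl.
by have := minB _ suppBz (subsetDl B [set z]); move/setP/(_ z); rewrite !inE eqxx zB.
Qed.

Variable X : {set T}.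

Definition classes_meeting : {set {set T}} :=
  [set RN R x | x in [set x : T | RN R x :&: X != set0]].

Lemma supp_indep_card_le I :
  supp_indep R I -> I \subset X -> #|I| <= #|classes_meeting|.
Proof.
case/existsP=> B /andP[minB sIB] sIX.
have injI : {in I &, injective (RN R)}.
  by move=> y z yI zI; apply: (minset_supp_inj minB); apply: (subsetP sIB).
rewrite -(card_in_imset injI); apply/subset_leq_card/subsetP => _ /imsetP[y yI ->].
apply: imset_f; rewrite inE; apply/set0Pn; exists y.
by rewrite inE RN_refl (subsetP sIX).
Qed.

Lemma exists_supp_indep_card_ge :
  exists2 I, supp_indep R I && (I \subset X) & #|classes_meeting| <= #|I|.
Proof.
pose S := X :|: [set x | RN R x :&: X == set0].
have suppS : supp R S.
  apply/suppP => x; apply/set0Pn.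
  have [RNxX | /set0Pn[y /setIP[yRNx yX]]] := eqVneq (RN R x :&: X) set0.
    by exists x; rewrite in_setI RN_refl in_setU in_set RNxX eqxx orbT.
  by exists y; rewrite in_setI yRNx in_setU yX.
have [B minB sBS] := minset_exists suppS.
exists (B :&: X).
  by rewrite subsetIr andbT; apply/existsP; exists B; rewrite minB subsetIl.
apply: leq_trans (leq_imset_card (RN R) _); apply/subset_leq_card/subsetP.
move=> C /imsetP[x]; rewrite inE => RNxX ->.
have /minsetP[/suppP suppB _] := minB.
have /set0Pn[b /setIP[bRNx bB]] := suppB x.
have bX : b \in X.
  have := subsetP sBS b bB; rewrite !inE -(eq_RN bRNx).
  by rewrite (negbTE RNxX) orbF.
by apply/imsetP; exists b; [rewrite in_setI bB bX | exact: eq_RN].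
Qed.

End SupportMatroidOfEquivalence.

Theorem proposition6 (T : finType) (R : rel T) :
  0 < #|T| -> equivalence_rel R ->
  forall X : {set T},
    supp_rank R X = #|[set RN R x | x in [set x : T | RN R x :&: X != set0]]|.
Proof.
move=> _ eqR X; apply/eqP; rewrite eqn_leq; apply/andP; split.
  by apply/bigmax_leqP => I /andP[indI sIX]; apply: supp_indep_card_le.
have [I indI_sIX le_classes_I] := exists_supp_indep_card_ge eqR X.
by apply: leq_trans le_classes_I (leq_bigmax_cond _ _).
Qed.
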